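(* Let $f_{\theta}:\mathbb{R}^d\to\mathbb{R}$ be differentiable, let $\mathbf{x}_1,\ldots,\mathbf{x}_n\in\mathbb{R}^d$ be data points with coordinates $\mathbf{x}_i=(x_{1i},\ldots,x_{di})$, and fix $j\in\{1,\ldots,d\}$ with $\sum_{i=1}^n x_{ji}^2>0$. Suppose $f_\theta$ is weakly invariant to the $j$-th feature with constant $C>0$, i.e. $\left|\frac{\partial f_\theta(\mathbf{x})}{\partial x_j}\right|<C$ for all $\mathbf{x}\in\mathbb{R}^d$. Consider the MIND objective with gating transformation and inner-product similarity regularization, $$L(\mathbf{g})=\frac{1}{n}\sum_{i=1}^n\Big[\,\big|f_\theta(\mathbf{x}_i)-f_\theta(\mathbf{g}\odot\mathbf{x}_i)\big|+\lambda\,(\mathbf{g}\odot\mathbf{x}_i)^{\top}\mathbf{x}_i\Big],\qquad \mathbf{g}\in[0,1]^d .$$ If $\lambda\geq C\,\frac{\sum_{i=1}^n|x_{ji}|}{\sum_{i=1}^n x_{ji}^2}$, then every global minimizer $\mathbf{g}^*$ of $L$ over $[0,1]^d$ satisfies $g^*_j=0$.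
   Context: $\odot$ denotes the element-wise (Hadamard) product. The vector $\mathbf{g}\in[0,1]^d$ parametrizes the gating transformation $\mathbf{x}\mapsto\mathbf{g}\odot\mathbf{x}$; its entries $g_j$ are called MIND scores. $f_\theta$ is a fixed (pre-trained) prediction function and $\lambda>0$ is the regularization coefficient. *)

From Stdlib Require Import Reals.
From mathcomp Require Import ssreflect ssrfun ssrbool eqtype ssrnat seq choice fintype.
Set Implicit Arguments.
Open Scope R_scope.

Definition vec (d : nat) := 'I_d -> R.

Definition sumI (d : nat) (F : 'I_d -> R) : R :=
  foldr (fun k acc => F k + acc) 0 (enum 'I_d).

(* sum_{i=0}^{n-1} F i  (data points indexed 0..n-1) *)
Fixpoint sumN (n : nat) (F : nat -> R) : R :=
  match n with O => 0 | S m => sumN m F + F m end.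

Definition hadamard (d : nat) (g x : vec d) : vec d := fun k => g k * x k.

Definition inner (d : nat) (u v : vec d) : R := sumI (fun k => u k * v k).

Definition upd (d : nat) (x : vec d) (j : 'I_d) (t : R) : vec d :=
  fun k => if k == j then t else x k.

Definition differentiable_at (d : nat) (f : vec d -> R) (x : vec d) : Prop :=
  exists v : vec d, forall eps, 0 < eps -> exists delta, 0 < delta /\
    forall h : vec d, (forall k, Rabs (h k) < delta) ->
      Rabs (f (fun k => x k + h k) - f x - inner v h)
        <= eps * sumI (fun k => Rabs (h k)).

Definition differentiable (d : nat) (f : vec d -> R) : Prop :=
  forall x, differentiable_at f x.

Definition weakly_invariant (d : nat) (f : vec d -> R) (j : 'I_d) (C : R) : Prop :=
  forall (x : vec d) (l : R),
    derivable_pt_lim (fun t => f (upd x j t)) (x j) l -> Rabs l < C.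

Definition in_box (d : nat) (g : vec d) : Prop := forall k, 0 <= g k <= 1.

Definition MIND_loss (d n : nat) (f : vec d -> R) (X : nat -> vec d) (lam : R)
    (g : vec d) : R :=
  / INR n * sumN n (fun i =>
     Rabs (f (X i) - f (hadamard g (X i))) + lam * inner (hadamard g (X i)) (X i)).

Definition global_minimizer (d n : nat) (f : vec d -> R) (X : nat -> vec d)
    (lam : R) (g : vec d) : Prop :=
  in_box g /\ forall g', in_box g' -> MIND_loss n f X lam g <= MIND_loss n f X lam g'.

(* Replacing g_j by 0 moves the gated point g ⊙ x_i along the j-th axis only, so by the mean
   value theorem the prediction term grows by less than C g_j |x_ji| (strictly when
   x_ji ≠ 0), while the regularizer drops by exactly λ g_j x_ji^2. Summing over the data,
   the loss strictly decreases whenever g_j > 0, since λ Σ x_ji^2 ≥ C Σ |x_ji|. *)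
From Stdlib Require Import Reals Lra FunctionalExtensionality ClassicalEpsilon.
From mathcomp Require Import ssreflect ssrfun ssrbool eqtype ssrnat seq fintype.
Open Scope R_scope.

Lemma foldr_add_diff {T : eqType} {F G : T -> R} {j : T} {s : seq T} :
  uniq s -> (forall k, k <> j -> F k = G k) ->
  foldr (fun k acc => F k + acc) 0 s - foldr (fun k acc => G k + acc) 0 s
  = if j \in s then F j - G j else 0.
Proof.
move=> + FG; elim: s => [|a s IH] /=; first lra.
case/andP=> a_notin_s /IH {}IH; rewrite in_cons.
have -> : forall u v w z : R, u + v - (w + z) = (u - w) + (v - z) by move=> *; ring.
rewrite IH; have [->|ja] := eqVneq j a; first by rewrite (negbTE a_notin_s) /=; lra.
by rewrite FG /=; [case: (j \in s); lra | move=> aj; rewrite aj eqxx in ja].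
Qed.

Lemma sumI_diff {d : nat} {F G : 'I_d -> R} (j : 'I_d) :
  (forall k, k <> j -> F k = G k) -> sumI F - sumI G = F j - G j.
Proof. by move=> FG; rewrite /sumI (foldr_add_diff (enum_uniq _) FG) mem_enum. Qed.

Lemma sumI_supp1 {d : nat} {F : 'I_d -> R} (j : 'I_d) :
  (forall k, k <> j -> F k = 0) -> sumI F = F j.
Proof.
move=> F0; have := @sumI_diff d F (fun _ => 0) j F0.
suff -> : sumI (fun _ : 'I_d => 0) = 0 by lra.
by rewrite /sumI; elim: (enum 'I_d) => //= a s ->; lra.
Qed.

Lemma sumN_add (n : nat) (F G : nat -> R) :
  sumN n (fun i => F i + G i) = sumN n F + sumN n G.
Proof. by elim: n => /= [|n ->]; lra. Qed.

Lemma sumN_le (n : nat) {F G : nat -> R} :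
  (forall i, F i <= G i) -> sumN n F <= sumN n G.
Proof. by move=> FG; elim: n => /= [|n IH]; [lra | have := FG n; lra]. Qed.

Lemma sumN_lt {n : nat} {F G : nat -> R} {i : nat} :
  (i < n)%nat -> (forall k, F k <= G k) -> F i < G i -> sumN n F < sumN n G.
Proof.
move=> + FG FGi; elim: n => // n IH /=; rewrite ltnS leq_eqVlt.
case/orP=> [/eqP <-|/IH]; last by have := FG n; lra.
by have := sumN_le i FG; lra.
Qed.

Lemma sumN_neq0 {n : nat} {F : nat -> R} :
  sumN n F <> 0 -> exists2 i, (i < n)%nat & F i <> 0.
Proof.
elim: n => /= [|n IH]; first by [].
have [Fn0|] := Req_dec (F n) 0; last by exists n.
by rewrite Fn0 Rplus_0_r => /IH [i lt_in]; exists i => //; apply: ltnW.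
Qed.

Lemma upd_upd (d : nat) (y : vec d) (j : 'I_d) (a b : R) :
  upd (upd y j a) j b = upd y j b.
Proof. by apply: functional_extensionality => k; rewrite /upd; case: (k == j). Qed.

Lemma upd_id (d : nat) (y : vec d) (j : 'I_d) : upd y j (y j) = y.
Proof. by apply: functional_extensionality => k; rewrite /upd; case: eqP => [->|]. Qed.

Lemma upd_same (d : nat) (y : vec d) (j : 'I_d) (a : R) : upd y j a j = a.
Proof. by rewrite /upd eqxx. Qed.

Lemma hadamard_upd0 (d : nat) (g x : vec d) (j : 'I_d) :
  hadamard (upd g j 0) x = upd (hadamard g x) j 0.
Proof.
by apply: functional_extensionality => k; rewrite /hadamard /upd; case: (k == j); ring.
Qed.

(* Test the differentiability condition on increments supported by the j-th coordinate. *)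
Lemma differentiable_at_partial (d : nat) (f : vec d -> R) (y : vec d) (j : 'I_d) (t : R) :
  differentiable_at f (upd y j t) ->
  exists l, derivable_pt_lim (fun s => f (upd y j s)) t l.
Proof.
move=> [v Dv]; exists (v j) => eps eps_gt0.
have [delta [delta_gt0 Hdelta]] := Dv (eps / 2) ltac:(lra).
exists (mkposreal delta delta_gt0) => h h_neq0 /= h_lt.
pose e : vec d := fun k => if k == j then h else 0.
have e_supp k : k <> j -> e k = 0 by rewrite /e; case: eqP.
have e_small k : Rabs (e k) < delta.
  by rewrite /e; case: (k == j) => //; rewrite Rabs_R0.
have := Hdelta e e_small.
have -> : (fun k => upd y j t k + e k) = upd y j (t + h).
  by apply: functional_extensionality => k; rewrite /upd /e; case: (k == j); lra.
rewrite /inner (@sumI_supp1 _ _ j) => [|k /e_supp ->]; last by ring.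
rewrite (@sumI_supp1 _ _ j) => [|k /e_supp ->]; last exact: Rabs_R0.
rewrite /e eqxx => Hle.
have h_pos : 0 < Rabs h by apply: Rabs_pos_lt.
have -> : (f (upd y j (t + h)) - f (upd y j t)) / h - v j
        = (f (upd y j (t + h)) - f (upd y j t) - v j * h) / h by field.
rewrite /Rdiv Rabs_mult Rabs_inv.
apply: (Rmult_lt_reg_r (Rabs h)) => //.
by rewrite Rmult_assoc Rinv_l ?Rmult_1_r; [nra | lra].
Qed.

Lemma derivable_lt_lipschitz {phi : R -> R} {C a b : R} :
  (forall t, exists l, derivable_pt_lim phi t l) ->
  (forall t l, derivable_pt_lim phi t l -> Rabs l < C) ->
  a <> b -> Rabs (phi b - phi a) < C * Rabs (b - a).
Proof.
move=> Dphi Cphi.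
have [phi' Dphi'] : exists phi' : R -> R, forall t, derivable_pt_lim phi t (phi' t).
  exists (fun t => proj1_sig (constructive_indefinite_description _ (Dphi t))).
  by move=> t; case: constructive_indefinite_description.
suff lt_case u v : u < v -> Rabs (phi v - phi u) < C * Rabs (v - u).
  move=> ab; have [/lt_case //|ba] := Rlt_or_le a b.
  by rewrite Rabs_minus_sym (Rabs_minus_sym b); apply: lt_case; lra.
move=> uv; have [c [-> _]] := MVT_cor2 phi phi' u v uv (fun c _ => Dphi' c).
rewrite Rabs_mult.
by apply: Rmult_lt_compat_r; [apply: Rabs_pos_lt; lra | exact: Cphi (Dphi' c)].
Qed.

Lemma weakly_invariant_drop {d : nat} {f : vec d -> R} {j : 'I_d} {C : R} {y : vec d} :
  differentiable f -> weakly_invariant f j C -> y j <> 0 ->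
  Rabs (f y - f (upd y j 0)) < C * Rabs (y j).
Proof.
move=> Df Wf yj0; pose phi t := f (upd y j t).
have Dphi t : exists l, derivable_pt_lim phi t l by apply: differentiable_at_partial.
have Cphi t l : derivable_pt_lim phi t l -> Rabs l < C.
  move=> Dl; apply: (Wf (upd y j t)); rewrite upd_same.
  suff -> : (fun s => f (upd (upd y j t) j s)) = phi by [].
  by apply: functional_extensionality => s; rewrite upd_upd.
have := derivable_lt_lipschitz Dphi Cphi (nesym yj0).
by rewrite /phi upd_id Rminus_0_r.
Qed.

Lemma weakly_invariant_drop_le {d : nat} {f : vec d -> R} {j : 'I_d} {C : R} (y : vec d) :
  differentiable f -> weakly_invariant f j C -> 0 < C ->
  Rabs (f y - f (upd y j 0)) <= C * Rabs (y j).
Proof.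
move=> Df Wf C_gt0; have [yj0|yj0] := Req_dec (y j) 0.
  have -> : upd y j 0 = y by rewrite -yj0 upd_id.
  rewrite Rminus_diag yj0 Rabs_R0; lra.
exact/Rlt_le/weakly_invariant_drop.
Qed.

Definition mind_term {d : nat} (f : vec d -> R) (lam : R) (g x : vec d) : R :=
  Rabs (f x - f (hadamard g x)) + lam * inner (hadamard g x) x.

Section DropFeature.

Context {d : nat} {f : vec d -> R} {j : 'I_d} {C lam : R}.
Hypotheses (Df : differentiable f) (Wf : weakly_invariant f j C) (C_gt0 : 0 < C).

Let drop_gap (g x : vec d) : R := g j * (lam * x j ^ 2 - C * Rabs (x j)).

(* The prediction term is compared through the triangle inequality at [g ⊙ x]. *)
Lemma mind_term_drop_bounds {g : vec d} (x : vec d) :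
  0 <= g j ->
  Rabs (f x - f (hadamard (upd g j 0) x))
    <= Rabs (f x - f (hadamard g x)) + C * (g j * Rabs (x j)) /\
  lam * inner (hadamard (upd g j 0) x) x
    = lam * inner (hadamard g x) x - lam * (g j * x j ^ 2).
Proof.
move=> gj_ge0; rewrite hadamard_upd0; set y := hadamard g x; split.
- have yj : Rabs (y j) = g j * Rabs (x j).
    by rewrite /y /hadamard Rabs_mult Rabs_pos_eq.
  have := weakly_invariant_drop_le y Df Wf C_gt0; rewrite yj.
  have := Rabs_triang (f x - f y) (f y - f (upd y j 0)).
  have -> : f x - f y + (f y - f (upd y j 0)) = f x - f (upd y j 0) by ring.
  lra.
- have drop_inner : inner y x - inner (upd y j 0) x = y j * x j.
    rewrite /inner (sumI_diff j) ?upd_same; first ring.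
    by move=> k kj; rewrite /upd; case: eqP.
  have yjxj : y j * x j = g j * x j ^ 2 by rewrite /y /hadamard; ring.
  have -> : inner (upd y j 0) x = inner y x - g j * x j ^ 2 by lra.
  ring.
Qed.

Lemma mind_term_drop_le {g : vec d} (x : vec d) :
  0 <= g j -> mind_term f lam (upd g j 0) x + drop_gap g x <= mind_term f lam g x.
Proof.
move=> gj_ge0; have [pred_le reg_eq] := mind_term_drop_bounds x gj_ge0.
by rewrite /mind_term /drop_gap reg_eq; nra.
Qed.

Lemma mind_term_drop_lt {g x : vec d} :
  0 < g j -> x j <> 0 ->
  mind_term f lam (upd g j 0) x + drop_gap g x < mind_term f lam g x.
Proof.
move=> gj_gt0 xj0; have [_ reg_eq] := mind_term_drop_bounds x (Rlt_le _ _ gj_gt0).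
rewrite /mind_term /drop_gap reg_eq hadamard_upd0.
have yj0 : hadamard g x j <> 0 by rewrite /hadamard; apply: Rmult_integral_contrapositive; lra.
have := weakly_invariant_drop Df Wf yj0.
have := Rabs_triang (f x - f (hadamard g x)) (f (hadamard g x) - f (upd (hadamard g x) j 0)).
rewrite /hadamard Rabs_mult (Rabs_pos_eq (g j)); last lra.
have -> : forall a b c : R, a - b + (b - c) = a - c by move=> *; ring.
nra.
Qed.

Lemma MIND_loss_drop_lt {n : nat} {X : nat -> vec d} {g : vec d} :
  0 < sumN n (fun i => X i j ^ 2) ->
  C * sumN n (fun i => Rabs (X i j)) <= lam * sumN n (fun i => X i j ^ 2) ->
  0 < g j -> MIND_loss n f X lam (upd g j 0) < MIND_loss n f X lam g.
Proof.
move=> S2_gt0 CS1_le gj_gt0.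
have [i lt_in Xij0] : exists2 i, (i < n)%nat & X i j <> 0.
  have [i lt_in sq_neq0] := sumN_neq0 (nesym (Rlt_not_eq _ _ S2_gt0)).
  by exists i => // Xij; apply: sq_neq0; rewrite Xij; ring.
have gaps : sumN n (fun k => drop_gap g (X k))
          = g j * (lam * sumN n (fun k => X k j ^ 2) - C * sumN n (fun k => Rabs (X k j))).
  by rewrite /drop_gap; elim: (n) => /= [|m ->]; ring.
have lt_sum := sumN_lt lt_in (fun k => mind_term_drop_le (X k) (Rlt_le _ _ gj_gt0))
  (mind_term_drop_lt gj_gt0 Xij0).
rewrite sumN_add gaps in lt_sum.
have n_gt0 : 0 < / INR n by apply/Rinv_0_lt_compat/lt_0_INR/ltP; case: (n) lt_in.
apply: Rmult_lt_compat_l n_gt0 _.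
have gap_ge0 : 0 <= g j * (lam * sumN n (fun k => X k j ^ 2) - C * sumN n (fun k => Rabs (X k j))).
  by apply: Rmult_le_pos; lra.
change (sumN n (fun k => mind_term f lam (upd g j 0) (X k))
  < sumN n (fun k => mind_term f lam g (X k))); lra.
Qed.

End DropFeature.

Theorem theorem1 (d n : nat) (f : vec d -> R) (X : nat -> vec d) (j : 'I_d)
    (C lam : R) :
  differentiable f ->
  0 < sumN n (fun i => (X i j) ^ 2) ->
  0 < C ->
  weakly_invariant f j C ->
  0 < lam ->
  lam >= C * (sumN n (fun i => Rabs (X i j)) / sumN n (fun i => (X i j) ^ 2)) ->
  forall g : vec d, global_minimizer n f X lam g -> g j = 0.
Proof.
move=> Df S2_gt0 C_gt0 Wf _ lam_ge g [g_box g_min].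
have CS1_le : C * sumN n (fun i => Rabs (X i j)) <= lam * sumN n (fun i => X i j ^ 2).
  apply: (Rmult_le_reg_r (/ sumN n (fun i => X i j ^ 2))); first exact: Rinv_0_lt_compat.
  rewrite Rmult_assoc (Rmult_assoc lam) Rinv_r ?Rmult_1_r /Rdiv in lam_ge *; lra.
have [gj_ge0 _] := g_box j.
have [gj_gt0|//] := Rle_lt_or_eq_dec _ _ gj_ge0; exfalso.
have drop_box : in_box (upd g j 0).
  by move=> k; rewrite /upd; case: (k == j); [lra | apply: g_box].
have := MIND_loss_drop_lt Df Wf C_gt0 S2_gt0 CS1_le gj_gt0.
by have := g_min _ drop_box; lra.
Qed.
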